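(* Let $\nu$ be an ergodic $S$-invariant probability measure on $X_\eta$ different from the Dirac measure at the all-zero sequence. Then for each $k\ge1$ there exists $b'_k$ with $1<b'_k$ and $b'_k\mid b_k$ such that all $b'_k$-th roots of unity are eigenvalues of $(S,X_\eta,\nu)$. In particular the system $(S,X_\eta,\nu)$ has infinite rational discrete spectrum.
   Context: Let $S$ be the shift on $\{0,1\}^{\mathbb Z}$, $(Sx)(n)=x(n+1)$. Let $\mathscr{B}=\{b_1,b_2,\dots\}\subset\{2,3,\dots\}$ with $\gcd(b_i,b_j)=1$ for $i\ne j$ and $\sum_i1/b_i<\infty$. Define $\eta(n)=1$ iff $b_i\nmid n$ for all $i$ (else $0$), and let $X_\eta$ be the set of $y\in\{0,1\}^{\mathbb Z}$ all of whose finite blocks occur in $\eta$; equivalently $y\in X_\eta$ iff $|\mathrm{supp}(y)\bmod b_i|<b_i$ for all $i$, with $\mathrm{supp}(y)=\{n:y(n)=1\}$. An eigenvalue of $(S,X_\eta,\nu)$ is $\lambda\in\mathbb C$ such that $f\circ S=\lambda f$ for some nonzero $f\in L^2(\nu)$. *)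

From HB Require Import structures.
From mathcomp Require Import all_boot all_order all_algebra.
From mathcomp Require Import all_classical all_reals all_analysis.
From mathcomp Require Import complex.
Set Implicit Arguments. Unset Strict Implicit. Unset Printing Implicit Defensive.
Import Order.TTheory GRing.Theory Num.Theory.
Local Open Scope classical_set_scope.
Local Open Scope ring_scope.

(* Points of {0,1}^Z : true = 1, false = 0. *)
Definition cylinders : set (set (int -> bool)) :=
  [set A | exists (n : int) (e : bool), A = [set y | y n = e]].

Definition Omega := g_sigma_algebraType cylinders.

Definition shift (x : Omega) : Omega := fun n => x (n + 1)%R.

Definition zero_seq : Omega := fun _ => false.

Definition eta (b : nat -> nat) : int -> bool :=
  fun n => `[< forall i, ~ (b i %| `|n|)%N >].

Definition Xeta (b : nat -> nat) : set Omega :=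
  [set y | forall (m : int) (len : nat), exists t : int,
     forall j : nat, (j < len)%N -> y (m + j%:Z)%R = eta b (t + j%:Z)%R].

Definition shift_invariant {R : realType} (nu : probability Omega R) :=
  forall A : set Omega, measurable A -> nu (shift @^-1` A) = nu A.

Definition ergodic {R : realType} (nu : probability Omega R) :=
  forall A : set Omega, measurable A -> shift @^-1` A = A ->
    nu A = 0%E \/ nu A = 1%E.

Definition cmeasurable {R : realType} (f : Omega -> R[i]) :=
  measurable_fun setT (fun x => complex.Re (f x)) /\
  measurable_fun setT (fun x => complex.Im (f x)).

Definition in_L2 {R : realType} (nu : probability Omega R) (f : Omega -> R[i]) :=
  cmeasurable f /\
  (\int[nu]_x ((complex.Re (f x)) ^+ 2 + (complex.Im (f x)) ^+ 2)%:E < +oo)%E.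

Definition sys_eigenvalue {R : realType} (nu : probability Omega R) (lam : R[i]) :=
  exists f : Omega -> R[i],
    in_L2 nu f /\
    ~ (\forall x \ae nu, f x = 0) /\
    (\forall x \ae nu, f (shift x) = lam * f x).

From Pilot Require Import Defs.
From HB Require Import structures.
From mathcomp Require Import all_boot all_order all_algebra.
From mathcomp Require Import all_classical all_reals all_analysis.
From mathcomp Require Import complex.
From mathcomp Require Import zify ring.
Set Implicit Arguments. Unset Strict Implicit. Unset Printing Implicit Defensive.
Import Order.TTheory GRing.Theory Num.Theory.
Local Open Scope classical_set_scope.
Local Open Scope ring_scope.

(* Fix B = b_k and record, for each residue r mod B, whether y vanishes on the
   whole class r + BZ.  This pattern is a measurable function of y with
   finitely many values, and the shift acts on it by the cyclic rotation of
   'I_B.  A point of X_eta avoids at least one class (a window of y containing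
   a 1 in every class would have to occur in eta, which vanishes on BZ), and
   only the zero sequence avoids all of them, which is nu-null by ergodicity.
   Hence nu charges the fiber of some pattern H that is not rotation invariant;
   if d is the exact rotation period of H, then 1 < d, d | B, and for every
   d-th root of unity z the function
     y |-> sum_{j < B, rot^j (pattern y) = H} z^(-j)
   is an eigenfunction with eigenvalue z that does not vanish on the fiber of
   H.  Since the b_k are pairwise coprime, so are the periods d_k, which gives
   infinitely many distinct roots of unity among the eigenvalues. *)

Definition avoids_class (B : nat) (y : Omega) (r : int) : Prop :=
  forall m : int, y (r + m * B%:Z) = false.

Lemma avoids_classDM B y r c :
  avoids_class B y (r + c * B%:Z) <-> avoids_class B y r.
Proof.
split=> yr m; last by rewrite -addrA -mulrDl.
by have := yr (m - c); rewrite -addrA -mulrDl (addrC c) subrK.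
Qed.

Lemma avoids_class_modz B y r :
  avoids_class B y (r %% B%:Z)%Z <-> avoids_class B y r.
Proof. by rewrite -(@avoids_classDM B y _ (r %/ B%:Z)%Z) addrC -divz_eq. Qed.

Lemma avoids_class_shift B y r :
  avoids_class B (Defs.shift y) r <-> avoids_class B y (r + 1).
Proof. by split=> yr m; have := yr m; rewrite /Defs.shift addrAC. Qed.

Section CyclicRotation.
Variable B : nat.
Implicit Types p H : {ffun 'I_B -> bool}.

Definition ord_addn (r : 'I_B) (j : nat) : 'I_B :=
  Ordinal (ltn_pmod (r + j) (leq_ltn_trans (leq0n r) (ltn_ord r))).

Definition rotf j p : {ffun 'I_B -> bool} := [ffun r => p (ord_addn r j)].

Lemma rotfD i j p : rotf i (rotf j p) = rotf (i + j) p.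
Proof.
apply/ffunP => r; rewrite !ffunE; congr (p _).
by apply: val_inj; rewrite /= modnDml addnA.
Qed.

Lemma rotf0 p : rotf 0 p = p.
Proof.
apply/ffunP => r; rewrite ffunE; congr (p _).
by apply: val_inj; rewrite /= addn0 modn_small.
Qed.

Lemma rotf_id p : rotf B p = p.
Proof.
apply/ffunP => r; rewrite ffunE; congr (p _).
by apply: val_inj; rewrite /= modnDr modn_small.
Qed.

Lemma rotfM j p : rotf j p = p -> forall q, rotf (q * j) p = p.
Proof.
by move=> pj; elim=> [|q IHq]; rewrite ?rotf0 // mulSn -rotfD IHq pj.
Qed.

Lemma rotf1_const p : (0 < B)%N -> rotf 1 p = p ->
  p = [ffun=> true] \/ p = [ffun=> false].
Proof.
move=> B_gt0 p1; pose o : 'I_B := Ordinal B_gt0.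
have p_const r : p r = p o.
  rewrite -[in RHS](rotfM p1 r) muln1 ffunE; congr (p _); apply: val_inj.
  by rewrite /= add0n modn_small.
by case: (p o) p_const => p_const; [left | right];
  apply/ffunP => r; rewrite p_const ffunE.
Qed.

Lemma rotf_period H : (0 < B)%N -> rotf 1 H != H ->
  exists d, [/\ (1 < d)%N, (d %| B)%N & forall j, rotf j H = H -> (d %| j)%N].
Proof.
move=> B_gt0 H1.
have : exists j, (0 < j)%N && (rotf j H == H) by exists B; rewrite B_gt0 rotf_id eqxx.
case/ex_minnP=> d /andP[d_gt0 /eqP Hd] d_min.
have stab j : rotf j H = H -> (d %| j)%N.
  move=> Hj; apply/eqP.
  have Hr : rotf (j %% d)%N H = H.
    by rewrite -{1}(rotfM Hd (j %/ d)%N) rotfD addnC -divn_eq.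
  case: (posnP (j %% d)%N) => // r_gt0.
  by have := d_min (j %% d)%N; rewrite r_gt0 Hr eqxx leqNgt ltn_pmod // => /(_ isT).
exists d; split; [|exact: stab (rotf_id H)|exact: stab].
by rewrite ltn_neqAle d_gt0 andbT; apply/eqP => d1; move: H1; rewrite d1 Hd eqxx.
Qed.

End CyclicRotation.

Definition class_pattern B (y : Omega) : {ffun 'I_B -> bool} :=
  [ffun r : 'I_B => `[< avoids_class B y r >]].

Lemma class_pattern_shift B y :
  class_pattern B (Defs.shift y) = rotf 1 (class_pattern B y).
Proof.
apply/ffunP => r; rewrite !ffunE; congr `[< _ >]; apply: propext.
by rewrite avoids_class_shift /= -modz_nat avoids_class_modz PoszD.
Qed.

Section Phase.
Variables (F : numDomainType) (B : nat) (H : {ffun 'I_B -> bool}) (w : F).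

Definition phase (p : {ffun 'I_B -> bool}) : F :=
  \sum_(0 <= j < B) ((rotf j p == H)%:R * w ^+ j).

Lemma phase_rotf1 p : (0 < B)%N -> w ^+ B = 1 -> w * phase (rotf 1 p) = phase p.
Proof.
move=> B_gt0 wB; rewrite /phase mulr_sumr.
under eq_bigr do rewrite rotfD addn1 mulrCA -exprS.
rewrite -(big_add1 0 +%R 0 B.+1 xpredT (fun j => (rotf j p == H)%:R * w ^+ j)).
by rewrite big_nat_recr //= rotf_id wB [RHS](big_ltn B_gt0) rotf0 expr0 addrC.
Qed.

Lemma phase_neq0 : (0 < B)%N -> (forall j, rotf j H = H -> w ^+ j = 1) ->
  phase H != 0.
Proof.
move=> B_gt0 wH.
have -> : phase H = (\sum_(0 <= j < B) (rotf j H == H : nat))%:R.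
  rewrite natr_sum; apply: eq_bigr => j _.
  by case: eqP => [/wH ->|_]; rewrite ?mulr1 ?mul0r.
by rewrite (big_ltn B_gt0) rotf0 eqxx pnatr_eq0.
Qed.

End Phase.

Lemma countable_bigcapT_measurable d (T : measurableType d) (U : countType)
    (F : U -> set T) :
  (forall i, measurable (F i)) -> measurable (\bigcap_i F i).
Proof.
move=> mF; rewrite -[X in measurable X]setCK setC_bigcap; apply: measurableC.
by apply: countable_bigcupT_measurable => [|i]; [exact: countableP | exact/measurableC].
Qed.

Lemma cylinder_measurable (n : int) (e : bool) : measurable [set y : Omega | y n = e].
Proof. by apply: sub_gen_smallest; exists n, e. Qed.

Lemma avoids_class_measurable B r : measurable [set y | avoids_class B y r].
Proof.
have -> : [set y | avoids_class B y r] =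
    \bigcap_m [set y : Omega | y (r + m * B%:Z) = false].
  by apply/seteqP; split=> y /= yr m; [move=> _|]; apply: yr.
by apply: countable_bigcapT_measurable => m; apply: cylinder_measurable.
Qed.

Lemma class_pattern_fiber_measurable B H :
  measurable (class_pattern B @^-1` [set H]).
Proof.
rewrite (_ : _ @^-1` _ = \bigcap_(r : 'I_B) [set y | `[< avoids_class B y r >] = H r]).
  apply: countable_bigcapT_measurable => r; case: (H r).
    rewrite (_ : [set y | _] = [set y | avoids_class B y r]).
      exact: avoids_class_measurable.
    by apply/seteqP; split=> y /= /asboolP.
  rewrite (_ : [set y | _] = ~` [set y | avoids_class B y r]).
    exact: measurableC (avoids_class_measurable B r).
  by apply/seteqP; split=> y /=; [move/negbT/asboolPn | move/asboolPn/negbTE].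
apply/seteqP; split=> y /=; first by move=> <- r _; rewrite ffunE.
by move=> yH; apply/ffunP => r; rewrite ffunE yH.
Qed.

Lemma measurable_fun_class_pattern B d' (T' : sigmaRingType d')
    (g : {ffun 'I_B -> bool} -> T') :
  measurable_fun setT (g \o class_pattern B).
Proof.
move=> _ Y mY; rewrite setTI.
rewrite (_ : _ @^-1` _ = \bigcup_(H in g @^-1` Y) class_pattern B @^-1` [set H]).
  apply: fin_bigcup_measurable; first exact: finite_finset.
  by move=> H _; apply: class_pattern_fiber_measurable.
by apply/seteqP; split=> y /=; [exists (class_pattern B y) | case=> H /= gH ->].
Qed.

Lemma zero_seq_measurable : measurable [set zero_seq].
Proof.
rewrite (_ : [set zero_seq] = \bigcap_n [set y : Omega | y n = false]).
  by apply: countable_bigcapT_measurable => n; apply: cylinder_measurable.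
apply/seteqP; split=> y /=; first by move=> -> n.
by move=> y0; apply: funext => n; apply: y0.
Qed.

Lemma Xeta_measurable b : measurable (Xeta b).
Proof.
rewrite (_ : Xeta b = \bigcap_(m : int) \bigcap_(len : nat) \bigcup_(t : int)
    \bigcap_(j in [set j : nat | (j < len)%N])
      [set y : Omega | y (m + j%:Z) = Defs.eta b (t + j%:Z)]).
  do 2 apply: countable_bigcapT_measurable => ?.
  apply: countable_bigcupT_measurable => [|t]; first exact: countableP.
  by apply: bigcap_measurableType => j _; apply: cylinder_measurable.
apply/seteqP; split=> y /= Xy.
  by move=> m _ len _; have [t yt] := Xy m len; exists t => // j; apply: yt.
by move=> m len; have [t _ yt] := Xy m I len I; exists t => j; apply: yt.
Qed.

Section ProbabilityFacts.
Context d (T : measurableType d) (R : realType) (P : probability T R).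
Local Open Scope ereal_scope.

Lemma probability1_disjoint0 (A B : set T) : measurable A -> measurable B ->
  P A = 1 -> A `&` B = set0 -> P B = 0.
Proof.
move=> mA mB PA1 AB0.
have PAc0 : P (~` A) = 0 by rewrite probability_setC // PA1 subee.
apply: subset_measure0 mB (measurableC mA) _ PAc0.
by move=> x Bx Ax; have : (A `&` B) x by []; rewrite AB0.
Qed.

Lemma probability_dirac (x : T) : measurable [set x] -> P [set x] = 1 ->
  forall A, measurable A -> P A = \d_x A.
Proof.
move=> mx Px1 A mA; rewrite diracE; case: (boolP (x \in A)) => [/set_mem Ax|/negP Ax].
  have PAc0 : P (~` A) = 0.
    apply: probability1_disjoint0 mx (measurableC mA) Px1 _.
    by apply/seteqP; split=> // y [-> ].
  by have := probability_setC P (measurableC mA); rewrite setCK PAc0 sube0.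
apply: probability1_disjoint0 mx mA Px1 _.
by apply/seteqP; split=> // y [-> /mem_set].
Qed.

Lemma probability_fiber_gt0 (F : finType) (f : T -> F) (Q : pred F) :
    (forall v, measurable (f @^-1` [set v])) ->
    (forall v, Q v -> P (f @^-1` [set v]) = 0) ->
  exists2 v, ~~ Q v & 0 < P (f @^-1` [set v]).
Proof.
move=> mf Qnull; apply: contrapT => none.
have null v : P (f @^-1` [set v]) = 0.
  case Qv: (Q v); first exact: Qnull.
  apply/eqP; rewrite eq_le measure_ge0 andbT leNgt; apply/negP => Pv_gt0.
  by apply: none; exists v; rewrite ?Qv.
have partition : [set: T] = \bigcup_(v in [set: F]) f @^-1` [set v].
  by apply/seteqP; split=> // x _; exists (f x).
have := probability_setT P; rewrite partition measure_fin_bigcup //.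
- rewrite fsbig1 => [|v _]; last exact: null.
  by move/esym/eqP; rewrite onee_eq0.
- exact: finite_finset.
- by move=> v w _ _ [x [/= <- <-]].
Qed.

End ProbabilityFacts.

Lemma exists_ord_modz B (n : int) : (0 < B)%N -> exists r : 'I_B, r%:Z = (n %% B%:Z)%Z.
Proof.
move=> B_gt0; have B0 : B%:Z != 0 by rewrite eqz_nat -lt0n.
have r_lt : (`|(n %% B%:Z)%Z| < B)%N by rewrite -ltz_nat gez0_abs ?modz_ge0 ?ltz_pmod.
by exists (Ordinal r_lt); rewrite /= gez0_abs ?modz_ge0.
Qed.

Lemma class_pattern_true B y : (0 < B)%N ->
  class_pattern B y = [ffun=> true] -> y = zero_seq.
Proof.
move=> B_gt0 yT; apply: funext => n; have [r rE] := exists_ord_modz n B_gt0.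
have : class_pattern B y r by rewrite yT ffunE.
by rewrite ffunE rE => /asboolP/avoids_class_modz/(_ 0); rewrite mul0r addr0.
Qed.

Lemma eta_dvd b k (n : int) : (b k %| `|n|)%N -> Defs.eta b n = false.
Proof. by move=> bk; apply/negbTE/asboolPn => /(_ k). Qed.

Lemma Xeta_avoids_class b k y : (0 < b k)%N -> Xeta b y ->
  exists r : 'I_(b k), avoids_class (b k) y r.
Proof.
set B := b k => B_gt0 Xy; apply: contrapT => hits.
have hit (r : 'I_B) : exists m : int, y (r%:Z + m * B%:Z) = true.
  apply: contrapT => none; apply: hits; exists r => m.
  by apply/negbTE/negP => ym; apply: none; exists m.
have [g yg] := choice hit.
pose n (r : 'I_B) := r%:Z + g r * B%:Z.
pose N := (\sum_(r : 'I_B) `|n r|)%N.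
have [t yt] := Xy (- N%:Z) (N.*2).+1.
have [r0 r0E] := exists_ord_modz (- (t + N%:Z)) B_gt0.
have nN : (`|n r0| <= N)%N by rewrite /N (bigD1 r0) //= leq_addr.
have j_lt : (`|(n r0 + N%:Z)%R| < (N.*2).+1)%N by lia.
have := yt _ j_lt; rewrite gez0_abs; last by lia.
rewrite (_ : - N%:Z + _ = n r0); last by ring.
rewrite yg (eta_dvd (k := k)) //.
have -> : t + (n r0 + N%:Z) = (g r0 - divz (- (t + N%:Z)) B%:Z) * B%:Z.
  by have := divz_eq (- (t + N%:Z)) B%:Z; rewrite -r0E /n; lia.
by rewrite abszM dvdn_mull.
Qed.

Lemma shift_preimage_zero_seq : Defs.shift @^-1` [set zero_seq] = [set zero_seq].
Proof.
apply/seteqP; split=> y /=; last by move->.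
move=> y0; apply: funext => n.
by have := congr1 (fun x => x (n - 1)) y0; rewrite /Defs.shift subrK.
Qed.

Lemma ergodic_zero_seq_null (R : realType) (nu : probability Omega R) :
  ergodic nu -> (exists A, measurable A /\ nu A <> \d_zero_seq A) ->
  nu [set zero_seq] = 0%E.
Proof.
move=> erg [A [mA nuA]].
have [] // := erg _ zero_seq_measurable shift_preimage_zero_seq.
by move/(probability_dirac zero_seq_measurable)/(_ A mA).
Qed.

Lemma exists_nonconstant_pattern (R : realType) (nu : probability Omega R) b k :
  (0 < b k)%N -> nu (Xeta b) = 1%E -> nu [set zero_seq] = 0%E ->
  exists2 H : {ffun 'I_(b k) -> bool},
    rotf 1 H != H & (0 < nu (class_pattern (b k) @^-1` [set H]))%E.
Proof.
move=> bk_gt0 Xeta1 zero0.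
apply: (probability_fiber_gt0 (Q := fun H => rotf 1 H == H)).
  exact: class_pattern_fiber_measurable.
move=> H /eqP /(rotf1_const bk_gt0) [] ->.
  apply: subset_measure0 (class_pattern_fiber_measurable _) zero_seq_measurable _ zero0.
  by move=> y /= /(class_pattern_true bk_gt0).
apply: probability1_disjoint0 (Xeta_measurable b) (class_pattern_fiber_measurable _)
  Xeta1 _.
apply/seteqP; split=> // y [Xy /= yF].
have [r yr] := Xeta_avoids_class bk_gt0 Xy.
have := congr1 (fun p : {ffun 'I_(b k) -> bool} => p r) yF.
by rewrite !ffunE (asboolT yr).
Qed.

Lemma in_L2_class_pattern (R : realType) (nu : probability Omega R) B
    (g : {ffun 'I_B -> bool} -> R[i]) :
  in_L2 nu (g \o class_pattern B).
Proof.
pose sq p := complex.Re (g p) ^+ 2 + complex.Im (g p) ^+ 2.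
have sq_ge0 p : 0 <= sq p by rewrite addr_ge0 ?sqr_ge0.
pose M := \sum_p sq p.
have sq_le p : sq p <= M by rewrite /M (bigD1 p) //= lerDl sumr_ge0.
split.
  split; first exact: (measurable_fun_class_pattern (fun p => complex.Re (g p))).
  exact: (measurable_fun_class_pattern (fun p => complex.Im (g p))).
apply: (le_lt_trans (y := \int[nu]_x (cst M%:E) x)%E).
  apply: ge0_le_integral => //.
  - by move=> x _; rewrite lee_fin sq_ge0.
  - apply/measurable_realfun.measurable_EFinP.
    exact: (measurable_fun_class_pattern sq).
  - by move=> x _; rewrite lee_fin sq_le.
by rewrite integral_cst //= probability_setT mule1 ltry.
Qed.

Lemma class_pattern_eigenvalue (R : realType) (nu : probability Omega R) B
    (H : {ffun 'I_B -> bool}) d (z : R[i]) :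
  (0 < B)%N -> (0 < nu (class_pattern B @^-1` [set H]))%E -> (d %| B)%N ->
  (forall j, rotf j H = H -> (d %| j)%N) -> z ^+ d = 1 -> sys_eigenvalue nu z.
Proof.
move=> B_gt0 nuH dB Hd zd; have d_gt0 : (0 < d)%N := dvdn_gt0 B_gt0 dB.
pose w := z ^+ d.-1.
have zw : z * w = 1 by rewrite -exprS prednK.
have wd : w ^+ d = 1 by rewrite -exprM mulnC exprM zd expr1n.
have w_dvd j : (d %| j)%N -> w ^+ j = 1.
  by case/dvdnP=> q ->; rewrite mulnC exprM wd expr1n.
exists (phase H w \o class_pattern B); split; first exact: in_L2_class_pattern.
split; last first.
  apply: aeW => y /=; rewrite class_pattern_shift.
  by rewrite -[in RHS](phase_rotf1 H _ B_gt0 (w_dvd B dB)) mulrA zw mul1r.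
case=> N [mN nuN0 fN]; move: nuH; rewrite (subset_measure0 _ mN _ nuN0) ?ltxx //.
  exact: class_pattern_fiber_measurable.
move=> y /= yH; apply: fN => /=; rewrite yH; apply/eqP.
exact: (phase_neq0 B_gt0 (fun j Hj => w_dvd j (Hd j Hj))).
Qed.

Lemma exists_root1_neq1 (F : numClosedFieldType) d : (1 < d)%N ->
  exists2 z : F, z ^+ d = 1 & z != 1.
Proof.
move=> d_gt1; pose q : {poly F} := \poly_(i < d) 1.
have size_q : size q = d by rewrite size_poly_eq // oner_neq0.
have [z qz] : exists z, root q z by apply/closed_rootP; rewrite size_q gtn_eqF.
have qE x : q.[x] = \sum_(i < d) x ^+ i.
  by rewrite horner_poly; apply: eq_bigr => i _; rewrite mul1r.
exists z; first by apply/eqP; rewrite -subr_eq0 subrX1 -qE (eqP qz) mulr0.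
apply: contraTneq qz => ->; rewrite /root qE.
under eq_bigr do rewrite expr1n.
by rewrite sumr_const card_ord pnatr_eq0 -lt0n ltnW.
Qed.

Lemma coprime_expr_eq1 (F : pzRingType) (z : F) m n : (0 < m)%N -> coprime m n ->
  z ^+ m = 1 -> z ^+ n = 1 -> z = 1.
Proof.
move=> m_gt0 mn zm zn; have [a _] := Bezoutl n m_gt0.
rewrite (eqP mn) => /dvdnP[c cE].
have := congr1 (GRing.exp z) cE.
by rewrite exprD expr1 mulnC exprM zn expr1n mulr1 mulnC exprM zm expr1n.
Qed.

Lemma coprime_orders_roots_infinite (F : numClosedFieldType) (D : nat -> nat)
    (S : set F) :
  (forall k, 1 < D k)%N -> (forall i j, i != j -> coprime (D i) (D j)) ->
  (forall k z, z ^+ D k = 1 -> S z) -> infinite_set S.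
Proof.
move=> D_gt1 D_coprime DS.
have root k : exists z : F, z ^+ D k = 1 /\ z != 1.
  by have [z] := exists_root1_neq1 F (D_gt1 k); exists z.
have [Z ZE] := choice root.
have Z_inj : injective Z.
  move=> i j Zij; apply/eqP; apply: contraT => ij.
  have [ZiDi Zi_neq1] := ZE i.
  have ZiDj : Z i ^+ D j = 1 by rewrite Zij; case: (ZE j).
  have := coprime_expr_eq1 (ltnW (D_gt1 i)) (D_coprime i j ij) ZiDi ZiDj.
  by move/eqP; rewrite (negbTE Zi_neq1).
move=> S_fin; apply: infinite_nat.
rewrite (_ : setT = Z @^-1` S).
  by apply: finite_preimage => // i j _ _; apply: Z_inj.
by apply/seteqP; split=> // k _; apply: DS (ZE k).1.
Qed.

Theorem mainTheorem8 (R : realType) (b : nat -> nat)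
  (hb2 : forall i, (2 <= b i)%N)
  (hcop : forall i j, i <> j -> coprime (b i) (b j))
  (hsum : (\sum_(0 <= i <oo) (((b i)%:R^-1 : R)%:E) < +oo)%E)
  (nu : probability Omega R)
  (hsupp : nu (Xeta b) = 1%E)
  (hinv : shift_invariant nu)
  (herg : ergodic nu)
  (hnd : exists A : set Omega, measurable A /\ nu A <> \d_zero_seq A) :
  (forall k : nat, exists b' : nat,
     [/\ (1 < b')%N, (b' %| b k)%N &
         forall z : R[i], z ^+ b' = 1 -> sys_eigenvalue nu z]) /\
  infinite_set [set z : R[i] | sys_eigenvalue nu z /\
                               exists n : nat, (0 < n)%N /\ z ^+ n = 1].
Proof.
have bk_gt0 k : (0 < b k)%N by apply: leq_trans (hb2 k).
have zero0 := ergodic_zero_seq_null herg hnd.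
have eigen_divisor k : exists b' : nat, [/\ (1 < b')%N, (b' %| b k)%N &
    forall z : R[i], z ^+ b' = 1 -> sys_eigenvalue nu z].
  have [H H_nonconst nuH] := exists_nonconstant_pattern (bk_gt0 k) hsupp zero0.
  have [d [d_gt1 d_bk d_min]] := rotf_period (bk_gt0 k) H_nonconst.
  by exists d; split=> // z; apply: class_pattern_eigenvalue nuH d_bk d_min.
split=> //; have [D DE] := choice eigen_divisor.
apply: (coprime_orders_roots_infinite (D := D)) => [k | i j /eqP ij | k z zD].
- by case: (DE k).
- have [_ Di _] := DE i; have [_ Dj _] := DE j.
  exact: coprime_dvdl Di (coprime_dvdr Dj (hcop i j ij)).
- by case: (DE k) => D_gt1 _ eig; split; [exact: eig | exists (D k); rewrite ltnW].
Qed.
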